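(* Let $F'_X\le F_X$ and $F_Z$ be distribution functions, and let $\phi'$ and $\phi$ be the canonical generators of $(F'_X,F_Z)$ and $(F_X,F_Z)$ respectively. Then $\phi'\le\phi$ pointwise on $[0,1]$.
   Context: A distribution function is a non-decreasing map $F:\mathbb R\to[0,1]$ (no right-continuity assumed) with limits $0$ at $-\infty$ and $1$ at $+\infty$; $f(x\pm)$ denote one-sided limits. The canonical generator $\phi$ of $(F_X,F_Z)$: with $F=F_XF_Z$, $\phi(0)=0$, $\phi(1)=1$, and for $u\in(0,1)$ choose $x_0$ with $F(x_0-)\le u\le F(x_0+)$, set $u_-=F(x_0-)$, $u_l=F_X(x_0-)F_Z(x_0)$, $u_u=F_X(x_0+)F_Z(x_0)$, $u_+=F(x_0+)$, and $\phi(u)=F_X(x_0-)$ if $u_-\le u\le u_l$, $\phi(u)=u/F_Z(x_0)$ if $u_l\le u\le u_u$, $\phi(u)=F_X(x_0+)$ if $u_u\le u\le u_+$ (this is independent of the choices). *)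

From HB Require Import structures.
From mathcomp Require Import all_boot all_order all_algebra.
From mathcomp Require Import all_classical all_reals topology normedtype.
Set Implicit Arguments. Unset Strict Implicit. Unset Printing Implicit Defensive.
Import Order.TTheory GRing.Theory Num.Theory.
Import numFieldNormedType.Exports.
Local Open Scope classical_set_scope.
Local Open Scope ring_scope.

Section Defs.
Variable R : realType.

(* A distribution function: non-decreasing, values in [0,1], limit 0 at -oo
   and 1 at +oo (no right-continuity assumed). *)
Definition distribution_function (F : R -> R) : Prop :=
  [/\ {homo F : x y / x <= y},
      (forall x, 0 <= F x <= 1),
      F x @[x --> -oo] --> (0 : R) &
      F x @[x --> +oo] --> (1 : R)].

Definition lim_left (f : R -> R) (x : R) : R := lim (f @ x^'-).
Definition lim_right (f : R -> R) (x : R) : R := lim (f @ x^'+).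

Definition canonical_generator (FX FZ : R -> R) (u : R) : R :=
  if u == 0 then 0 else if u == 1 then 1 else
  let F := fun x => FX x * FZ x in
  let x0 := xget 0 [set x | lim_left F x <= u <= lim_right F x] in
  let ul := lim_left FX x0 * FZ x0 in
  let uu := lim_right FX x0 * FZ x0 in
  if u <= ul then lim_left FX x0
  else if u <= uu then u / FZ x0
  else lim_right FX x0.

End Defs.

(* For 0 < u < 1, phi(u) is u / F_Z(x0) clamped to [F_X(x0-), F_X(x0+)], where x0 is a
   point at which F = F_X F_Z crosses the level u; let x0' be such a point for
   F' = F'_X F_Z and phi'. If x0' < x0, then phi'(u) <= F'_X(x0'+) <= F_X(x0-) <= phi(u).
   If x0 < x0', then any y in between satisfies phi'(u) F_Z(y) <= u <= phi(u) F_Z(y) with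
   F_Z(y) > 0. If x0' = x0, the bounds of the clamp only increase from F'_X to F_X. *)
From HB Require Import structures.
From mathcomp Require Import all_boot all_order all_algebra.
From mathcomp Require Import all_classical all_reals topology normedtype realfun.
From mathcomp Require Import lra.
Set Implicit Arguments. Unset Strict Implicit. Unset Printing Implicit Defensive.
Import Order.TTheory GRing.Theory Num.Theory.
Import numFieldNormedType.Exports.
Local Open Scope classical_set_scope.
Local Open Scope ring_scope.

Section NondecreasingOneSidedLimits.
Variables (R : realType) (f : R -> R).
Hypothesis f_nd : {homo f : a b / a <= b}.

Lemma nondecreasing_cvg_at_left x : cvg (f @ x^'-).
Proof.
apply: nondecreasing_at_left_is_cvgr; first by near=> y => a b _ _; exact: f_nd.
near=> y; exists (f x) => _ /= [s sx <-]; apply: f_nd.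
by move: sx; rewrite in_itv/= => /andP[_ /ltW].
Unshelve. all: by end_near. Qed.

Lemma nondecreasing_cvg_at_right x : cvg (f @ x^'+).
Proof.
apply: nondecreasing_at_right_is_cvgr; first by near=> y => a b _ _; exact: f_nd.
near=> y; exists (f x) => _ /= [s sx <-]; apply: f_nd.
by move: sx; rewrite in_itv/= => /andP[/ltW].
Unshelve. all: by end_near. Qed.

Lemma lim_left_ge x y : y < x -> f y <= lim_left f x.
Proof.
move=> yx; apply: limr_ge; first exact: nondecreasing_cvg_at_left.
near=> t; apply/f_nd/ltW; near: t; exact: nbhs_left_gt.
Unshelve. all: by end_near. Qed.

Lemma lim_left_le x c : (forall y, y < x -> f y <= c) -> lim_left f x <= c.
Proof.
move=> fc; apply: limr_le; first exact: nondecreasing_cvg_at_left.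
near=> t; apply: fc; near: t; exact: nbhs_left_lt.
Unshelve. all: by end_near. Qed.

Lemma lim_right_le x y : x < y -> lim_right f x <= f y.
Proof.
move=> xy; apply: limr_le; first exact: nondecreasing_cvg_at_right.
near=> t; apply/f_nd/ltW; near: t; exact: nbhs_right_lt.
Unshelve. all: by end_near. Qed.

Lemma lim_right_ge x c : (forall y, x < y -> c <= f y) -> c <= lim_right f x.
Proof.
move=> cf; apply: limr_ge; first exact: nondecreasing_cvg_at_right.
near=> t; apply: cf; near: t; exact: nbhs_right_gt.
Unshelve. all: by end_near. Qed.

Lemma lim_left_le_self x : lim_left f x <= f x.
Proof. by apply: lim_left_le => y /ltW; apply: f_nd. Qed.

Lemma lim_right_ge_self x : f x <= lim_right f x.
Proof. by apply: lim_right_ge => y /ltW; apply: f_nd. Qed.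

Lemma lim_left_le_lim_right x : lim_left f x <= lim_right f x.
Proof. exact: le_trans (lim_left_le_self x) (lim_right_ge_self x). Qed.

Lemma lim_left_ge0 x : (forall y, 0 <= f y) -> 0 <= lim_left f x.
Proof.
move=> f_ge0; apply: le_trans (f_ge0 (x - 1)) (@lim_left_ge x (x - 1) _).
by rewrite ltrBlDr ltrDl.
Qed.

End NondecreasingOneSidedLimits.

Section ProductOfNondecreasing.
Variables (R : realType) (f g : R -> R).
Hypotheses (f_nd : {homo f : a b / a <= b}) (g_nd : {homo g : a b / a <= b}).

Lemma nondecreasingM : (forall x, 0 <= f x) -> (forall x, 0 <= g x) ->
  {homo (fun x => f x * g x) : a b / a <= b}.
Proof. by move=> f_ge0 g_ge0 a b ab; apply: ler_pM; [| |exact: f_nd|exact: g_nd]. Qed.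

Lemma lim_leftM x : lim_left (fun t => f t * g t) x = lim_left f x * lim_left g x.
Proof. by apply: cvg_lim => //; apply: cvgM; exact: nondecreasing_cvg_at_left. Qed.

Lemma lim_rightM x : lim_right (fun t => f t * g t) x = lim_right f x * lim_right g x.
Proof. by apply: cvg_lim => //; apply: cvgM; exact: nondecreasing_cvg_at_right. Qed.

End ProductOfNondecreasing.

Lemma distribution_function_nd (R : realType) (F : R -> R) :
  distribution_function F -> {homo F : a b / a <= b}.
Proof. by case. Qed.

Lemma distribution_function_ge0 (R : realType) (F : R -> R) :
  distribution_function F -> forall x, 0 <= F x.
Proof. by case=> _ F_01 _ _ x; case/andP: (F_01 x). Qed.

Definition level_set (R : realType) (F : R -> R) (u : R) : set R :=
  [set x | lim_left F x <= u <= lim_right F x].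

Lemma exists_level_point (R : realType) (F : R -> R) (u : R) :
  {homo F : a b / a <= b} -> F x @[x --> -oo] --> (0 : R) -> F x @[x --> +oo] --> (1 : R) ->
  0 < u < 1 -> exists x, level_set F u x.
Proof.
move=> F_nd F0 F1 /andP[u_gt0 u_lt1].
have [a Fa_lt] : exists a, F a < u := filter_ex (cvgr_lt _ F0 _ u_gt0).
have [b Fb_gt] : exists b, u < F b := filter_ex (cvgr_gt _ F1 _ u_lt1).
set A := [set x | F x < u].
have supA : has_sup A.
  split; first by exists a.
  exists b => x /= Fx_lt; rewrite leNgt; apply/negP => bx.
  by have := lt_trans Fx_lt Fb_gt; rewrite ltNge F_nd // ltW.
exists (sup A); apply/andP; split.
- apply: lim_left_le => // y ys.
  have := @sup_adherent _ A (sup A - y); rewrite subr_gt0 => /(_ ys supA) [x Ax].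
  rewrite opprB addrC subrK => yx.
  exact/ltW/(le_lt_trans (F_nd _ _ (ltW yx)) Ax).
- apply: lim_right_ge => // y sy; rewrite leNgt; apply/negP => Fy_lt.
  by have := sup_upper_bound supA Fy_lt; rewrite leNgt sy.
Qed.

Definition clamp_div (R : realType) (a b z u : R) : R :=
  if u <= a * z then a else if u <= b * z then u / z else b.

Section ClampDiv.
Variables (R : realType) (a b z u : R).
Hypotheses (a_ge0 : 0 <= a) (ab : a <= b) (z_ge0 : 0 <= z) (u_gt0 : 0 < u).

Let z_gt0_of_le_mul c : u <= c * z -> 0 < z.
Proof.
move=> ucz; rewrite lt_def z_ge0 andbT; apply: contraTneq ucz => ->.
by rewrite mulr0 -ltNge.
Qed.

Lemma clamp_div_bounds : a <= clamp_div a b z u <= b.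
Proof.
rewrite /clamp_div; have [_|uaz] := leP u (a * z); first by rewrite lexx ab.
have [ubz|_] := leP u (b * z); last by rewrite ab lexx.
have z_gt0 := z_gt0_of_le_mul ubz.
by rewrite ler_pdivlMr // ler_pdivrMr // ubz (ltW uaz).
Qed.

Lemma clamp_div_mul_le w : 0 <= w <= z -> a * w <= u -> clamp_div a b z u * w <= u.
Proof.
move=> /andP[w_ge0 wz] awu; rewrite /clamp_div; have [//|uaz] := leP u (a * z).
have [ubz|ubz] := leP u (b * z).
  by rewrite mulrAC ler_pdivrMr ?(z_gt0_of_le_mul ubz) // ler_pM2l.
by apply/ltW/(le_lt_trans _ ubz); rewrite ler_wpM2l // (le_trans a_ge0).
Qed.

Lemma clamp_div_mul_ge w : z <= w -> u <= b * w -> u <= clamp_div a b z u * w.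
Proof.
move=> zw ubw; rewrite /clamp_div; have [uaz|uaz] := leP u (a * z).
  exact: le_trans uaz (ler_wpM2l a_ge0 zw).
have [ubz|//] := leP u (b * z).
by rewrite mulrAC ler_pdivlMr ?(z_gt0_of_le_mul ubz) // ler_pM2l.
Qed.

Lemma le_clamp_div a' b' : a' <= a -> b' <= b -> a' <= b' ->
  clamp_div a' b' z u <= clamp_div a b z u.
Proof.
move=> a'a b'b a'b'; have [z0|z_neq0] := eqVneq z 0.
  by rewrite /clamp_div z0 !mulr0 (_ : (u <= 0) = false) // leNgt u_gt0.
have z_gt0 : 0 < z by rewrite lt_def z_neq0.
rewrite /clamp_div; have [] := leP u (a' * z); have [] := leP u (a * z);
  have [] := leP u (b' * z); have [] := leP u (b * z);
  move=> ? ? ? ?; rewrite ?ler_pdivrMr ?ler_pdivlMr ?divfK ?gt_eqF //; nra.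
Qed.

End ClampDiv.

Definition generator_at (R : realType) (FX FZ : R -> R) (u x : R) : R :=
  clamp_div (lim_left FX x) (lim_right FX x) (FZ x) u.

Definition level_point (R : realType) (FX FZ : R -> R) (u : R) : R :=
  xget 0 (level_set (fun x => FX x * FZ x) u).

Lemma canonical_generatorE (R : realType) (FX FZ : R -> R) (u : R) : u != 0 -> u != 1 ->
  canonical_generator FX FZ u = generator_at FX FZ u (level_point FX FZ u).
Proof. by move=> u_neq0 u_neq1; rewrite /canonical_generator (negbTE u_neq0) (negbTE u_neq1). Qed.

Lemma level_pointP (R : realType) (FX FZ : R -> R) (u : R) :
  distribution_function FX -> distribution_function FZ -> 0 < u < 1 ->
  level_set (fun x => FX x * FZ x) u (level_point FX FZ u).
Proof.
move=> dX dZ u01; have [_ _ FX0 FX1] := dX; have [_ _ FZ0 FZ1] := dZ.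
apply: xgetPex; apply: exists_level_point u01.
- apply: nondecreasingM;
    by [apply: distribution_function_nd | apply: distribution_function_ge0].
- by rewrite -[X in _ --> X](mulr0 (0 : R)); exact: cvgM.
- by rewrite -[X in _ --> X](mulr1 (1 : R)); exact: cvgM.
Qed.

Section GeneratorAt.
Variables (R : realType) (FX FZ : R -> R) (u x : R).
Hypotheses (FX_nd : {homo FX : a b / a <= b}) (FZ_nd : {homo FZ : a b / a <= b}).
Hypotheses (FX_ge0 : forall y, 0 <= FX y) (FZ_ge0 : forall y, 0 <= FZ y) (u_gt0 : 0 < u).

Let FX_left_ge0 : 0 <= lim_left FX x. Proof. exact: lim_left_ge0. Qed.
Let FX_left_le_right : lim_left FX x <= lim_right FX x. Proof. exact: lim_left_le_lim_right. Qed.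

Lemma generator_at_bounds : lim_left FX x <= generator_at FX FZ u x <= lim_right FX x.
Proof. exact: clamp_div_bounds. Qed.

Lemma generator_at_mul_le y : lim_left (fun t => FX t * FZ t) x <= u -> y < x ->
  generator_at FX FZ u x * FZ y <= u.
Proof.
rewrite lim_leftM // => Fx_le yx; have FZy_le := lim_left_ge FZ_nd yx.
apply: clamp_div_mul_le => //.
- by rewrite FZ_ge0 (le_trans FZy_le) // lim_left_le_self.
- by apply: le_trans Fx_le; rewrite ler_wpM2l.
Qed.

Lemma generator_at_mul_ge y : u <= lim_right (fun t => FX t * FZ t) x -> x < y ->
  u <= generator_at FX FZ u x * FZ y.
Proof.
rewrite lim_rightM // => Fx_ge xy; have FZy_ge := lim_right_le FZ_nd xy.
apply: clamp_div_mul_ge => //; first exact/FZ_nd/ltW.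
by apply: le_trans Fx_ge _; rewrite ler_wpM2l // (le_trans FX_left_ge0).
Qed.

End GeneratorAt.

Section Comparison.
Variables (R : realType) (FX' FX FZ : R -> R) (u x' x : R).
Hypotheses (FX'_nd : {homo FX' : a b / a <= b}) (FX_nd : {homo FX : a b / a <= b})
  (FZ_nd : {homo FZ : a b / a <= b}).
Hypotheses (FX'_ge0 : forall y, 0 <= FX' y) (FX_ge0 : forall y, 0 <= FX y)
  (FZ_ge0 : forall y, 0 <= FZ y).
Hypotheses (FX'_le : forall y, FX' y <= FX y) (u_gt0 : 0 < u).
Hypotheses (x'_level : level_set (fun t => FX' t * FZ t) u x')
  (x_level : level_set (fun t => FX t * FZ t) u x).

Lemma generator_at_le : generator_at FX' FZ u x' <= generator_at FX FZ u x.
Proof.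
have [x'x|xx'|<-] := ltgtP x' x.
- have [x'y yx] := midf_lt x'x.
  have /andP[_ G'_le] := generator_at_bounds x' FX'_nd FZ_ge0 u_gt0.
  have /andP[G_ge _] := generator_at_bounds x FX_nd FZ_ge0 u_gt0.
  apply: le_trans G'_le (le_trans (lim_right_le FX'_nd x'y) _).
  exact: le_trans (FX'_le _) (le_trans (lim_left_ge FX_nd yx) G_ge).
- have [xy yx'] := midf_lt xx'; set y := (x + x') / 2 in xy yx'.
  have /andP[x'_left _] := x'_level; have /andP[_ x_right] := x_level.
  have le_u : generator_at FX' FZ u x' * FZ y <= u by exact: generator_at_mul_le.
  have ge_u : u <= generator_at FX FZ u x * FZ y by exact: generator_at_mul_ge.
  have FZy_gt0 : 0 < FZ y.
    by rewrite lt_def FZ_ge0 andbT; apply: contraTneq ge_u => ->; rewrite mulr0 -ltNge.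
  by rewrite -(ler_pM2r FZy_gt0); exact: le_trans le_u ge_u.
- apply: le_clamp_div; rewrite ?FZ_ge0 ?(lim_left_le_lim_right FX'_nd) //.
  + by apply: lim_left_le => // y yx'; apply: le_trans (FX'_le y) (lim_left_ge FX_nd yx').
  + by apply: lim_right_ge => // y x'y; apply: le_trans (lim_right_le FX'_nd x'y) (FX'_le y).
Qed.

End Comparison.

Theorem lemma1 (R : realType) (FX' FX FZ : R -> R) :
  distribution_function FX' -> distribution_function FX ->
  distribution_function FZ ->
  (forall x, FX' x <= FX x) ->
  forall u : R, 0 <= u <= 1 ->
  canonical_generator FX' FZ u <= canonical_generator FX FZ u.
Proof.
move=> dX' dX dZ FX'_le u /andP[u_ge0 u_le1].
have [->|u_neq0] := eqVneq u 0; first by rewrite /canonical_generator eqxx.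
have [->|u_neq1] := eqVneq u 1; first by rewrite /canonical_generator eqxx oner_eq0.
have u_gt0 : 0 < u by rewrite lt_def u_neq0.
have u01 : 0 < u < 1 by rewrite u_gt0 lt_def eq_sym u_neq1.
rewrite !canonical_generatorE //.
apply: generator_at_le (level_pointP dX' dZ u01) (level_pointP dX dZ u01) => //;
  by [apply: distribution_function_nd | apply: distribution_function_ge0].
Qed.
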